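(* Let $\mathfrak{g}$ be a real filiform nilpotent Lie algebra of dimension $2n$, and let $e_1,\dots,e_{2n}$ be a basis such that for each $k=1,\dots,2n-2$ the term $\mathfrak{g}^k$ of the lower central series is spanned by $e_{2+k},\dots,e_{2n}$. Write $\hat k=2n+1-k$. If $[e_k,e_{\hat k}]\neq0$ for some $3\le k\le n$, then there is no positive filtration of $\mathfrak{g}$ with an adapted basis $f_1,\dots,f_{2n}$ whose weights $w_1,\dots,w_{2n}$ satisfy, with $\hat i=2n+1-i$: (F1) $0<w_1\le\dots\le w_{2n}$; (F2) $w_i+w_{\hat i}\ge w_{2n}$ and $w_i+w_{\hat i}>w_{2n-1}$ for all $i$; (F3) if $w_i+w_{\hat i}=w_{2n}$ and $w_i\neq w_{\hat i}$, then one of $w_i,w_{\hat i}$ has multiplicity at least two; (F4) if $w_i+w_{\hat i}=w_{2n}$ and $w_i=w_{\hat i}$, then either $i=\hat i$ or $w_i$ has multiplicity greater than two.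
   Context: Lower central series: $\mathfrak{g}^1=[\mathfrak{g},\mathfrak{g}]$, $\mathfrak{g}^{k+1}=[\mathfrak{g},\mathfrak{g}^k]$. A nilpotent Lie algebra of dimension $m$ is filiform if $\dim\mathfrak{g}^k=m-1-k$ for $1\le k\le m-2$. A positive filtration is a chain $\mathfrak{g}=L_1\supseteq L_2\supseteq\dots\supseteq L_N$ (not necessarily strict), with $L_k=0$ for $k>N$, such that $[L_i,L_j]\subseteq L_{i+j}$ for all positive integers $i,j$. The weight of a nonzero element is the largest $w$ with the element in $L_w$. An ordered basis is adapted if each $L_w$ is spanned by the last $\dim L_w$ basis elements; $w_i$ is the weight of the $i$-th basis element; the multiplicity of a value $\alpha$ is the number of $i$ with $w_i=\alpha$. *)

(* Real Lie algebras as finite-dimensional vector spaces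
   (vectType) over R : realType with a bilinear alternating bracket
   satisfying Jacobi. Indices of bases are 1-based (nat), as in the paper. *)
From HB Require Import structures.
From mathcomp Require Import all_boot all_order all_algebra.
From mathcomp Require Import reals.
Set Implicit Arguments. Unset Strict Implicit. Unset Printing Implicit Defensive.
Import Order.TTheory GRing.Theory Num.Theory.
Local Open Scope ring_scope.

Section Lie.
Variables (R : realType) (V : vectType R).

Definition is_lie_bracket (br : V -> V -> V) : Prop :=
  [/\ (forall (a : R) x y z, br (a *: x + y) z = a *: br x z + br y z),
      (forall (a : R) x y z, br z (a *: x + y) = a *: br z x + br z y),
      (forall x, br x x = 0) &
      (forall x y z, br x (br y z) + br y (br z x) + br z (br x y) = 0)].

(* [U, W] = subspace spanned by all brackets [u, w], u in U, w in W
   (by bilinearity, spanned by brackets of basis vectors). *)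
Definition brsp (br : V -> V -> V) (U W : {vspace V}) : {vspace V} :=
  (<<[seq br u w | u <- (vbasis U : seq V), w <- (vbasis W : seq V)]>>)%VS.

Fixpoint lcs (br : V -> V -> V) (k : nat) : {vspace V} :=
  if k is k'.+1 then brsp br fullv (lcs br k') else fullv.

Definition nilpotent_lie (br : V -> V -> V) : Prop :=
  exists k, lcs br k = 0%VS.

Definition filiform (br : V -> V -> V) : Prop :=
  nilpotent_lie br /\
  forall k, (1 <= k <= \dim (fullv : {vspace V}) - 2)%N ->
    \dim (lcs br k) = (\dim (fullv : {vspace V}) - 1 - k)%N.

(* positive filtration g = L_1 ⊇ L_2 ⊇ ... ⊇ L_N, L_k = 0 for k > N,
   [L_i, L_j] ⊆ L_{i+j}; only indices >= 1 matter. *)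
Definition pos_filtration (br : V -> V -> V) (L : nat -> {vspace V}) : Prop :=
  [/\ L 1%N = fullv,
      (forall k, (1 <= k)%N -> (L k.+1 <= L k)%VS),
      (exists N, forall k, (N < k)%N -> L k = 0%VS) &
      (forall i j, (1 <= i)%N -> (1 <= j)%N -> (brsp br (L i) (L j) <= L (i + j)%N)%VS)].

Definition is_weight (L : nat -> {vspace V}) (x : V) (w : nat) : Prop :=
  [/\ (1 <= w)%N, x \in L w & forall w', (w < w')%N -> x \notin L w'].

Definition adapted_basis (L : nat -> {vspace V}) (m : nat) (f : nat -> V) : Prop :=
  basis_of fullv [seq f i | i <- iota 1 m] /\
  forall w, (1 <= w)%N ->
    L w = (<<[seq f i | i <- iota (m - \dim (L w)).+1 (\dim (L w))]>>)%VS.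

End Lie.

Definition mult (m : nat) (w : nat -> nat) (a : nat) : nat :=
  count (fun i => w i == a) (iota 1 m).

From HB Require Import structures.
From mathcomp Require Import all_boot all_order all_algebra.
From mathcomp Require Import reals.
From mathcomp Require Import zify.
From Stdlib Require Import Classical.
Import Order.TTheory GRing.Theory Num.Theory.
Local Open Scope ring_scope.
Set Implicit Arguments. Unset Strict Implicit.

(* Write F_t for the span of e_t, ..., e_m.  Then [g, g] = F_3 and
   [g, F_s] = F_(s+1) for 2 <= s < m, and some bracket [u, e_s] lies outside
   F_(s+2), so bracketing moves an element of F_s \ F_(s+1) exactly one step
   down the flag.  Hence an ideal containing an element outside F_(t+1), with
   t >= 3, contains all of F_t.  The terms L_c of a positive filtration are
   ideals with [g, L_c] <= L_(c+1); comparing dimensions with the adapted basis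
   forces w_2 < w_3 < ... < w_m and e_k in L_(w_k) for k >= 3.  So for
   k^ = m + 1 - k the nonzero bracket [e_k, e_k^] lies in L_(w_k + w_k^),
   whence w_k + w_k^ <= w_m, an equality by (F2); as w_k < w_k^ both have
   multiplicity one, contradicting (F3). *)

Lemma mult_eq1 m (w : nat -> nat) k : (0 < k <= m)%N ->
  (forall i, (0 < i <= m)%N -> w i = w k -> i = k) -> mult m w (w k) = 1%N.
Proof.
move=> hk w_inj; rewrite /mult (@eq_in_count _ _ (pred1 k)); last first.
  move=> i; rewrite mem_iota => hi /=; apply/eqP/eqP => [|-> //].
  by apply: w_inj; lia.
by rewrite count_uniq_mem ?iota_uniq // mem_iota; lia.
Qed.

Section VectorSpace.
Variables (K : fieldType) (vT : vectType K).

Lemma free_iota_suffix (g : nat -> vT) m t :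
  free [seq g i | i <- iota 1 m] -> (0 < t <= m.+1)%N ->
  free [seq g i | i <- iota t (m.+1 - t)].
Proof.
move=> g_free ht.
have iota_split : iota 1 m = iota 1 (t - 1) ++ iota (1 + (t - 1)) (m.+1 - t).
  by rewrite -iotaD; congr iota; lia.
move: g_free; rewrite iota_split map_cat => /catr_free.
by rewrite (_ : 1 + (t - 1) = t)%N //; lia.
Qed.

Lemma dimv_add_line (U : {vspace vT}) x : x \notin U -> \dim (<[x]> + U) = (\dim U).+1.
Proof.
move=> xNU; have lt : (\dim U < \dim (<[x]> + U))%N.
  by rewrite (ltn_leqif (dimv_leqif_sup (addvSr _ _))) subv_add -memvE negb_and xNU.
have le : (\dim (<[x]> + U) <= 1 + \dim U)%N.
  by apply: leq_trans (dimv_add_leqif _ _) _; rewrite leq_add2r dim_vline leq_b1.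
lia.
Qed.

Lemma exists_notin_dim_lt (U W : {vspace vT}) :
  (\dim W < \dim U)%N -> exists2 x, x \in U & x \notin W.
Proof. by move=> WU; apply/subvPn; apply: contraTN WU => /dimvS; rewrite -leqNgt. Qed.

End VectorSpace.

Section LieAlgebra.
Variables (R : realType) (V : vectType R) (br : V -> V -> V).
Hypothesis Hlie : is_lie_bracket br.

Lemma brDl x y z : br (x + y) z = br x z + br y z.
Proof. by have [brl _ _ _] := Hlie; have := brl 1 x y z; rewrite !scale1r. Qed.

Lemma brDr x y z : br z (x + y) = br z x + br z y.
Proof. by have [_ brr _ _] := Hlie; have := brr 1 x y z; rewrite !scale1r. Qed.

Lemma br0l z : br 0 z = 0.
Proof. by apply/(addrI (br 0 z)); rewrite -brDl !addr0. Qed.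

Lemma br0r z : br z 0 = 0.
Proof. by apply/(addrI (br z 0)); rewrite -brDr !addr0. Qed.

Lemma brZl a x z : br (a *: x) z = a *: br x z.
Proof. by have [brl _ _ _] := Hlie; have := brl a x 0 z; rewrite !addr0 br0l addr0. Qed.

Lemma brZr a x z : br z (a *: x) = a *: br z x.
Proof. by have [_ brr _ _] := Hlie; have := brr a x 0 z; rewrite !addr0 br0r addr0. Qed.

Lemma br_xx x : br x x = 0.
Proof. by case: Hlie. Qed.

Lemma br_antisym x y : br x y = - br y x.
Proof.
apply/eqP; rewrite -addr_eq0; apply/eqP.
by have := br_xx (x + y); rewrite brDl !brDr !br_xx add0r addr0 addrC.
Qed.

Lemma brsp_mem (U W : {vspace V}) u w :
  u \in U -> w \in W -> br u w \in brsp br U W.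
Proof.
have br_suml (I : Type) (r : seq I) (F : I -> V) z :
    br (\sum_(i <- r) F i) z = \sum_(i <- r) br (F i) z.
  exact: (big_morph (br^~ z) (fun x y => brDl x y z) (br0l z)).
have br_sumr (I : Type) (r : seq I) (F : I -> V) z :
    br z (\sum_(i <- r) F i) = \sum_(i <- r) br z (F i).
  exact: (big_morph (br z) (fun x y => brDr x y z) (br0r z)).
move=> uU wW; rewrite (coord_vbasis uU) (coord_vbasis wW) br_suml.
apply: memv_suml => i _; rewrite brZl br_sumr; apply: memvZ.
apply: memv_suml => j _; rewrite brZr; apply/memvZ/memv_span.
by apply: allpairs_f; apply: mem_nth; rewrite size_tuple.
Qed.

Lemma brsp_subv (U W X : {vspace V}) :
  (forall u w, u \in U -> w \in W -> br u w \in X) -> (brsp br U W <= X)%VS.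
Proof.
move=> UWX; apply/span_subvP => _ /allpairsP[[u w] [/= uU wW ->]].
by apply: UWX; apply: vbasis_mem.
Qed.

Lemma brspS (U U' W W' : {vspace V}) :
  (U <= U')%VS -> (W <= W')%VS -> (brsp br U W <= brsp br U' W')%VS.
Proof.
move=> /subvP UU' /subvP WW'; apply: brsp_subv => u w uU wW.
by apply: brsp_mem; [apply: UU' | apply: WW'].
Qed.

Lemma mem_br_subv (I J : {vspace V}) u y :
  (brsp br fullv I <= J)%VS -> y \in I -> br u y \in J.
Proof. by move=> /subvP IJ yI; apply/IJ/brsp_mem/yI; exact: memvf. Qed.

Lemma lcs_succ_sub k : (lcs br k.+1 <= lcs br k)%VS.
Proof. by elim: k => [|k IH]; [exact: subvf | exact: brspS]. Qed.

Lemma lcs_antitone k j : (lcs br (k + j) <= lcs br j)%VS.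
Proof.
elim: k => [|k IH]; first by rewrite add0n.
by rewrite addSn; apply: subv_trans (lcs_succ_sub _) IH.
Qed.

Lemma nilpotent_lcs_fix k :
  nilpotent_lie br -> lcs br k.+1 = lcs br k -> lcs br k = 0%VS.
Proof.
move=> [N lcsN] fix_k; have stable j : lcs br (j + k) = lcs br k.
  by elim: j => [|j IH]; rewrite ?add0n // addSn -[RHS]fix_k /= IH.
by apply/eqP; rewrite -subv0 -lcsN -(stable N) addnC lcs_antitone.
Qed.

Section Filtration.
Variables (m : nat) (L : nat -> {vspace V}) (f : nat -> V) (w : nat -> nat).
Hypothesis HL : pos_filtration br L.
Hypothesis HA : adapted_basis L m f.
Hypothesis HW : forall i, (0 < i <= m)%N -> is_weight L (f i) (w i).
Hypothesis Hmono : forall i, (0 < i < m)%N -> (w i <= w i.+1)%N.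

Lemma filtration_antitone a b : (0 < a <= b)%N -> (L b <= L a)%VS.
Proof.
case: HL => _ L_succ _ _ /andP[a0]; elim: b => [|b IH] ab; first lia.
have [-> // | ne] := eqVneq a b.+1.
by apply: subv_trans (L_succ b _) (IH _); lia.
Qed.

Lemma brsp_filtration c : (0 < c)%N -> (brsp br fullv (L c) <= L c.+1)%VS.
Proof. by case: HL => L1 _ _ L_br c0; rewrite -L1 -add1n; apply: L_br. Qed.

Lemma filtration_ideal c : (0 < c)%N -> (brsp br fullv (L c) <= L c)%VS.
Proof.
by move=> c0; apply: subv_trans (brsp_filtration c0) (filtration_antitone _); lia.
Qed.

Lemma mem_br_filtration a b x y : (0 < a)%N -> (0 < b)%N ->
  x \in L a -> y \in L b -> br x y \in L (a + b).
Proof.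
case: HL => _ _ _ L_br a0 b0 xa yb.
exact: subvP (L_br a b a0 b0) _ (brsp_mem xa yb).
Qed.

Lemma weight_gt0 i : (0 < i <= m)%N -> (0 < w i)%N.
Proof. by move=> hi; case: (HW hi). Qed.

Lemma weight_mono i j : (0 < i <= j)%N -> (j <= m)%N -> (w i <= w j)%N.
Proof.
move=> /andP[i0]; elim: j => [|j IH] ij jm; first lia.
have [-> // | ne] := eqVneq i j.+1.
by apply: leq_trans (IH _ _) (Hmono _); lia.
Qed.

Lemma f_in_filtration i c : (0 < i <= m)%N -> (0 < c <= w i)%N -> f i \in L c.
Proof. by move=> hi hc; case: (HW hi) => _ fi _; exact: subvP (filtration_antitone hc) _ fi. Qed.

Lemma dim_filtration_weight j : (0 < j <= m)%N -> (m.+1 - j <= \dim (L (w j)))%N.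
Proof.
move=> hj; have f_free : free [seq f i | i <- iota j (m.+1 - j)].
  by case: HA => /basis_free f_free _; apply: free_iota_suffix => //; lia.
rewrite -(size_iota j (m.+1 - j)) -(size_map f) -(eqP f_free).
apply/dimvS/span_subvP => v /mapP[i]; rewrite mem_iota => hi ->.
by apply: f_in_filtration; rewrite ?weight_gt0 ?weight_mono //; lia.
Qed.

Lemma dim_filtration_gt c i : (0 < c)%N -> (0 < i <= m)%N -> (w i < c)%N ->
  (\dim (L c) <= m - i)%N.
Proof.
move=> c0 hi wc; rewrite leqNgt; apply/negP => big.
case: (HW hi) => _ _ /(_ c wc)/negP; apply.
case: HA => _ L_span; rewrite (L_span c c0).
by apply/memv_span/map_f; rewrite mem_iota; lia.
Qed.

Lemma filtration_le_top c x : (0 < m)%N -> (0 < c)%N -> x \in L c -> x != 0 ->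
  (c <= w m)%N.
Proof.
move=> m0 c0 xc; apply: contraTT; rewrite -ltnNge => wc.
have : (\dim (L c) <= m - m)%N by apply: dim_filtration_gt; lia.
by rewrite subnn leqn0 dimv_eq0 => /eqP Lc0; move: xc; rewrite Lc0 memv0 negbK.
Qed.

Section FiliformBasis.
Variable e : nat -> V.
Hypothesis Hnil : nilpotent_lie br.
Hypothesis Hbasis : basis_of fullv [seq e i | i <- iota 1 m].
Hypothesis Hlcs : forall k, (1 <= k <= m - 2)%N ->
  lcs br k = (<<[seq e i | i <- iota (2 + k) (m - 1 - k)]>>)%VS.
Hypothesis Hm : (3 <= m)%N.

Definition flag t : {vspace V} := (<<[seq e i | i <- iota t (m.+1 - t)]>>)%VS.

Lemma dim_flag t : (0 < t <= m.+1)%N -> \dim (flag t) = (m.+1 - t)%N.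
Proof.
move=> ht; have /eqP -> : free [seq e i | i <- iota t (m.+1 - t)].
  by apply: free_iota_suffix => //; exact: basis_free Hbasis.
by rewrite size_map size_iota.
Qed.

Lemma flag1 : flag 1 = fullv.
Proof. by rewrite /flag subn1 -(span_basis Hbasis). Qed.

Lemma mem_flag1 x : x \in flag 1.
Proof. by rewrite flag1 memvf. Qed.

Lemma flag_eq0 t : (m < t)%N -> flag t = 0%VS.
Proof. by move=> mt; rewrite /flag (_ : m.+1 - t = 0)%N ?span_nil //; lia. Qed.

Lemma flag_cons t : (t <= m)%N -> flag t = (<[e t]> + flag t.+1)%VS.
Proof.
by move=> tm; rewrite /flag (_ : m.+1 - t = (m.+1 - t.+1).+1)%N ?span_cons //; lia.
Qed.

Lemma e_notin_flag t : (0 < t <= m)%N -> e t \notin flag t.+1.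
Proof.
move=> ht; have : free [seq e i | i <- iota t (m.+1 - t)].
  by apply: free_iota_suffix; [exact: basis_free Hbasis | lia].
rewrite (_ : m.+1 - t = (m.+1 - t.+1).+1)%N; last lia.
by rewrite /= free_cons => /andP[].
Qed.

Lemma mem_e_flag t i : (t <= i <= m)%N -> e i \in flag t.
Proof. by move=> hi; apply/memv_span/map_f; rewrite mem_iota; lia. Qed.

Lemma flag_antitone s t : (s <= t)%N -> (flag t <= flag s)%VS.
Proof.
move=> st; apply/span_subvP => v /mapP[i]; rewrite mem_iota => hi ->.
by apply: mem_e_flag; lia.
Qed.

Lemma flag_decomp t x : x \in flag t ->
  exists a x', x' \in flag t.+1 /\ x = a *: e t + x'.
Proof.
have [tm | mt] := leqP t m.
  by rewrite flag_cons // => /memv_addP[_ /vlineP[a ->] [x' x't ->]]; exists a, x'.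
rewrite flag_eq0 // memv0 => /eqP ->; exists 0, 0.
by rewrite mem0v scale0r addr0.
Qed.

Lemma flag_split t x : (0 < t <= m)%N -> x \in flag t -> x \notin flag t.+1 ->
  flag t = (<[x]> + flag t.+1)%VS.
Proof.
move=> ht xt xNt; apply/eqP; rewrite eq_sym eqEdim subv_add -memvE xt flag_antitone //=.
by rewrite dimv_add_line // !dim_flag; lia.
Qed.

Lemma flag_level t x : x \notin flag t.+1 ->
  exists s, [/\ (0 < s <= t)%N, x \in flag s & x \notin flag s.+1].
Proof.
elim: t => [|t IH] xN; first by rewrite mem_flag1 in xN.
have [xt1 | xNt1] := boolP (x \in flag t.+1); first by exists t.+1; split=> //; lia.
by have [s [hs xs xNs]] := IH xNt1; exists s; split=> //; lia.
Qed.

Lemma lcs_flag k : (0 < k <= m - 2)%N -> lcs br k = flag k.+2.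
Proof. by move=> hk; rewrite Hlcs // /flag (_ : m.+1 - k.+2 = m - 1 - k)%N //; lia. Qed.

Lemma brsp_fullv_flag : brsp br fullv fullv = flag 3.
Proof. by rewrite -[LHS]/(lcs br 1) lcs_flag //; lia. Qed.

Lemma brsp_flag_top : brsp br fullv (flag m) = 0%VS.
Proof.
have lcs_top : lcs br (m - 2) = flag m by rewrite lcs_flag; [congr flag | ]; lia.
rewrite -lcs_top -[brsp _ _ _]/(lcs br (m - 2).+1).
have [// | lcs_neq0] := eqVneq (lcs br (m - 2).+1) 0%VS.
have dim_top : \dim (flag m) = 1%N by rewrite dim_flag ?subSnn //; lia.
have /(nilpotent_lcs_fix Hnil) lcs_eq0 : lcs br (m - 2).+1 = lcs br (m - 2).
  by apply/eqP; rewrite eqEdim lcs_succ_sub lcs_top dim_top lt0n dimv_eq0.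
by move: dim_top; rewrite -lcs_top lcs_eq0 dimv0.
Qed.

Lemma brsp_flag s : (2 <= s < m)%N -> brsp br fullv (flag s) = flag s.+1.
Proof.
move=> hs; have [s2 | s3] := leqP s 2.
  have -> : s = 2%N by lia.
  (* [g, g] = [g, F_2] because [e_1, e_1] = 0. *)
  rewrite -brsp_fullv_flag; apply/eqP; rewrite eqEsubv brspS ?subvf //=.
  apply: brsp_subv => u v _ _; have [a [v' [v'2 ->]]] := flag_decomp (mem_flag1 v).
  rewrite brDr brZr; apply: memvD; last exact: brsp_mem (memvf u) v'2.
  have [b [u' [u'2 ->]]] := flag_decomp (mem_flag1 u).
  rewrite brDl !brZl br_xx scaler0 add0r; apply: memvZ.
  by rewrite br_antisym memvN; exact: brsp_mem (memvf _) u'2.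
have lcs_s : lcs br (s - 2) = flag s by rewrite lcs_flag; [congr flag | ]; lia.
have lcs_s1 : lcs br (s - 2).+1 = flag s.+1 by rewrite lcs_flag; [congr flag | ]; lia.
by rewrite -lcs_s -lcs_s1.
Qed.

Lemma mem_br_flag s u z : (0 < s)%N -> z \in flag s -> br u z \in flag s.+1.
Proof.
move=> s0; apply: mem_br_subv; have [s1 | s_gt1] := leqP s 1.
  have -> : s = 1%N by lia.
  by rewrite flag1 brsp_fullv_flag flag_antitone.
have [s_ltm | s_gem] := ltnP s m; first by rewrite brsp_flag //; lia.
apply: subv_trans (brspS (subvv _) (flag_antitone s_gem)) _.
by rewrite brsp_flag_top sub0v.
Qed.

Lemma exists_br_e_notin t : (2 <= t < m)%N -> exists u, br u (e t) \notin flag t.+2.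
Proof.
move=> ht; apply: NNPP => noU.
have inU u : br u (e t) \in flag t.+2 by apply/negPn/negP => Nu; apply: noU; exists u.
have : (flag t.+1 <= flag t.+2)%VS.
  rewrite -brsp_flag; last lia.
  apply: brsp_subv => u z _ zt; have [a [z' [z't1 ->]]] := flag_decomp zt.
  by rewrite brDr brZr memvD ?memvZ // mem_br_flag.
move=> /subvP sub; have /negP[] : e t.+1 \notin flag t.+2 by apply: e_notin_flag; lia.
by apply/sub/mem_e_flag; lia.
Qed.

Lemma br_notin_flag u x t s : x \in flag t -> x \notin flag t.+1 ->
  br u (e t) \notin flag s -> (forall y, y \in flag t.+1 -> br u y \in flag s) ->
  br u x \notin flag s.
Proof.
move=> xt xNt uN u_tail; have [a [x' [x't1 Ex]]] := flag_decomp xt.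
have a0 : a != 0 by apply: contraNneq xNt => a0; rewrite Ex a0 scale0r add0r.
apply: contra uN; rewrite Ex brDr brZr => ux.
rewrite -(scalerK a0 (br u (e t))); apply: memvZ.
by rewrite -(addrK (br u x') (a *: _)) memvB ?u_tail.
Qed.

Lemma br_e2_flag2 y : y \in flag 2 -> br (e 2) y \in flag 4.
Proof.
move=> y2; have [b [y' [y'3 ->]]] := flag_decomp y2.
by rewrite brDr brZr br_xx scaler0 add0r mem_br_flag.
Qed.

Lemma br_e2_e1_notin : br (e 2) (e 1) \notin flag 4.
Proof.
apply/negP => e21; have [u /negP[]] := exists_br_e_notin (t := 2) Hm.
have [a [u' [u'2 ->]]] := flag_decomp (mem_flag1 u).
rewrite brDl brZl; apply: memvD; first by apply: memvZ; rewrite br_antisym memvN.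
by rewrite br_antisym memvN br_e2_flag2.
Qed.

Lemma br_lowers_level t x : (2 <= t < m)%N -> x \in flag t -> x \notin flag t.+1 ->
  exists u, br u x \in flag t.+1 /\ br u x \notin flag t.+2.
Proof.
move=> ht xt xNt; have [u uN] := exists_br_e_notin ht.
exists u; split; first by apply: mem_br_flag xt; lia.
by apply: br_notin_flag xt xNt uN _ => y; apply: mem_br_flag.
Qed.

Lemma br_e2_lowers_level x : x \notin flag 2 ->
  br (e 2) x \in flag 3 /\ br (e 2) x \notin flag 4.
Proof.
move=> xN2; split; first by rewrite -brsp_fullv_flag brsp_mem ?memvf.
exact: br_notin_flag (mem_flag1 x) xN2 br_e2_e1_notin br_e2_flag2.
Qed.

Lemma ideal_flag_level (I : {vspace V}) t x : (brsp br fullv I <= I)%VS ->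
  (2 <= t <= m)%N -> x \in I -> x \in flag t -> x \notin flag t.+1 -> (flag t <= I)%VS.
Proof.
move=> idI; move Ed: (m - t)%N => d.
elim: d t x Ed => [|d IH] t x Ed ht xI xt xNt.
  by rewrite (flag_split _ xt xNt) ?subv_add -?memvE ?xI ?flag_eq0 ?sub0v //; lia.
have ht' : (2 <= t < m)%N by lia.
have [u [ux1 uxN2]] := br_lowers_level ht' xt xNt.
rewrite (flag_split _ xt xNt) ?subv_add -?memvE ?xI /=; last lia.
by apply: (IH t.+1 (br u x)); rewrite ?(mem_br_subv _ idI) //; lia.
Qed.

Lemma ideal_flag (I : {vspace V}) t x : (brsp br fullv I <= I)%VS ->
  (3 <= t <= m)%N -> x \in I -> x \notin flag t.+1 -> (flag t <= I)%VS.
Proof.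
move=> idI ht xI xNt; have [s [hs xs xNs]] := flag_level xNt.
have [s1 | s2] := leqP s 1.
  have xN2 : x \notin flag 2 by rewrite (_ : 2 = s.+1)%N //; lia.
  have [y3 yN4] := br_e2_lowers_level xN2.
  apply: subv_trans (flag_antitone _) (ideal_flag_level idI _ _ y3 yN4); try lia.
  exact: mem_br_subv idI xI.
by apply: subv_trans (flag_antitone _) (ideal_flag_level idI _ xI xs xNs); lia.
Qed.

Lemma exists_br_notin_flag t x : (2 <= t < m)%N -> x \notin flag t.+1 ->
  exists u, br u x \notin flag t.+2.
Proof.
move=> ht xNt; have [s [hs xs xNs]] := flag_level xNt.
have [s1 | s2] := leqP s 1.
  have xN2 : x \notin flag 2 by rewrite (_ : 2 = s.+1)%N //; lia.
  by exists (e 2); apply: contra (br_e2_lowers_level xN2).2; apply/subvP/flag_antitone; lia.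
have hs' : (2 <= s < m)%N by lia.
have [u [_ uxN]] := br_lowers_level hs' xs xNs.
by exists u; apply: contra uxN; apply/subvP/flag_antitone; lia.
Qed.

Lemma weight_lt_succ i : (2 <= i < m)%N -> (w i < w i.+1)%N.
Proof.
move=> hi; rewrite ltn_neqAle Hmono ?andbT; last lia.
apply/eqP => w_eq; have c0 : (0 < w i)%N by apply: weight_gt0; lia.
(* Otherwise F_(i+1) <= L_(w_i + 1), which is too small to contain it since
   f_(i+1) has weight w_i. *)
have [x xL xN] : exists2 x, x \in L (w i) & x \notin flag i.+1.
  apply: exists_notin_dim_lt; rewrite dim_flag; last lia.
  by have := @dim_filtration_weight i; lia.
have [u uxN] := exists_br_notin_flag hi xN.
have := dimvS (ideal_flag (filtration_ideal (ltn0Sn (w i))) _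
  (mem_br_subv _ (brsp_filtration c0) xL) uxN).
rewrite dim_flag; last lia.
by have := @dim_filtration_gt (w i).+1 i.+1; rewrite -w_eq; lia.
Qed.

Lemma weight_ltn i j : (2 <= i)%N -> (i < j <= m)%N -> (w i < w j)%N.
Proof.
move=> i2; elim: j => [|j IH] hj; first lia.
have [-> | ne] := eqVneq i j; first by apply: weight_lt_succ; lia.
by apply: ltn_trans (IH _) (weight_lt_succ _); lia.
Qed.

Lemma e_in_filtration k : (3 <= k <= m)%N -> e k \in L (w k).
Proof.
move=> hk; have c0 : (0 < w k)%N by apply: weight_gt0; lia.
have [x xL xN] : exists2 x, x \in L (w k) & x \notin flag k.+1.
  apply: exists_notin_dim_lt; rewrite dim_flag; last lia.
  by have := @dim_filtration_weight k; lia.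
by apply: (subvP (ideal_flag (filtration_ideal c0) hk xL xN)); apply: mem_e_flag; lia.
Qed.

Lemma mult_weight k : (3 <= k <= m)%N -> mult m w (w k) = 1%N.
Proof.
move=> hk; apply: mult_eq1 => [|i hi]; first lia.
have [ik | ki | -> //] := ltngtP i k.
  have := @weight_mono i k.-1; have := @weight_ltn k.-1 k; rewrite prednK; lia.
by have := @weight_ltn k i; lia.
Qed.

Lemma weight_pair k : (3 <= k)%N -> (2 * k <= m)%N -> br (e k) (e (m + 1 - k)) != 0 ->
  [/\ (w k < w (m + 1 - k))%N, (w k + w (m + 1 - k) <= w m)%N,
      mult m w (w k) = 1%N & mult m w (w (m + 1 - k)) = 1%N].
Proof.
move=> k3 km bk; set kh := (m + 1 - k)%N.
split; [apply: weight_ltn; lia | | apply: mult_weight; lia ..].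
have ek : e k \in L (w k) by apply: e_in_filtration; lia.
have ekh : e kh \in L (w kh) by apply: e_in_filtration; lia.
have wk0 : (0 < w k)%N by apply: weight_gt0; lia.
have wkh0 : (0 < w kh)%N by apply: weight_gt0; lia.
by apply: filtration_le_top (mem_br_filtration wk0 wkh0 ek ekh) bk; lia.
Qed.

End FiliformBasis.
End Filtration.
End LieAlgebra.

Unset Implicit Arguments.

Theorem lemma3p2 (R : realType) (V : vectType R) (br : V -> V -> V) (n : nat)
  (e : nat -> V) :
  is_lie_bracket br ->
  filiform br ->
  \dim (fullv : {vspace V}) = (2 * n)%N ->
  basis_of fullv [seq e i | i <- iota 1 (2 * n)] ->
  (forall k, (1 <= k <= 2 * n - 2)%N ->
     lcs br k = (<<[seq e i | i <- iota (2 + k) (2 * n - 1 - k)]>>)%VS) ->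
  (exists k, (3 <= k <= n)%N /\ br (e k) (e (2 * n + 1 - k)%N) != 0) ->
  ~ exists (L : nat -> {vspace V}) (f : nat -> V) (w : nat -> nat),
      pos_filtration br L /\
          adapted_basis L (2 * n) f /\
          (forall i, (1 <= i <= 2 * n)%N -> is_weight L (f i) (w i)) /\
          (* (F1) *)
          ((0 < w 1%N)%N /\ (forall i, (1 <= i < 2 * n)%N -> (w i <= w i.+1)%N)) /\
          (* (F2) *)
          (forall i, (1 <= i <= 2 * n)%N ->
             (w (2 * n)%N <= w i + w (2 * n + 1 - i)%N)%N /\
             (w (2 * n - 1)%N < w i + w (2 * n + 1 - i)%N)%N) /\
          (* (F3) *)
          (forall i, (1 <= i <= 2 * n)%N ->
             (w i + w (2 * n + 1 - i) = w (2 * n))%N ->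
             w i != w (2 * n + 1 - i)%N ->
             (2 <= mult (2 * n) w (w i))%N \/
             (2 <= mult (2 * n) w (w (2 * n + 1 - i)%N))%N) /\
          (* (F4) *)
          (forall i, (1 <= i <= 2 * n)%N ->
             (w i + w (2 * n + 1 - i) = w (2 * n))%N ->
             w i = w (2 * n + 1 - i)%N ->
             i = (2 * n + 1 - i)%N \/ (2 < mult (2 * n) w (w i))%N).
Proof.
move=> Hlie [Hnil _] _ Hbasis Hlcs [k [/andP[k3 kn] bk]]
  [L [f [w [HL [HA [HW [[_ Hmono] [HF2 [HF3 _]]]]]]]]].
have m3 : (3 <= 2 * n)%N by lia.
have km : (2 * k <= 2 * n)%N by lia.
have [lt_w le_top mult_k mult_kh] :=
  weight_pair Hlie HL HA HW Hmono Hnil Hbasis Hlcs m3 k3 km bk.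
have k_range : (1 <= k <= 2 * n)%N by lia.
have [top_le _] := HF2 k k_range.
have sum_eq : (w k + w (2 * n + 1 - k) = w (2 * n))%N by lia.
have := HF3 k k_range sum_eq; rewrite neq_ltn lt_w mult_k mult_kh.
by move=> /(_ isT) [].
Qed.
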